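(* Let $\delta\in(0,1]$, let $G$ be an $n$-vertex graph and let $V(G)=X_1\cup\dots\cup X_k$ be a partition such that each $X_i$ is a clique in $G$ and $(X_i,X_j)$ is induced $M_2$-free for every $1\le i<j\le k$. Then there is a $\delta$-homogeneous partition of $V(G)$ which refines $\{X_1,\dots,X_k\}$ and has at most $k(2/\delta)^k$ parts.
   Context: For disjoint $X,Y\subseteq V(G)$, an induced copy of $M_2$ in $(X,Y)$ is an unordered quadruple $x,x',y,y'$ with $x,x'\in X$, $y,y'\in Y$, $(x,y),(x',y')\in E(G)$ and $(x,y'),(x',y)\notin E(G)$; $(X,Y)$ is induced $M_2$-free if it contains no such copy. A pair $(A,B)$ of disjoint vertex sets is homogeneous if the bipartite graph of $G$ between $A$ and $B$ is complete or empty. A partition $\mathcal P$ of $V(G)$ of an $n$-vertex graph is $\delta$-homogeneous if the sum of $|U||V|$ over all unordered pairs of distinct parts $U,V\in\mathcal P$ such that $(U,V)$ is not homogeneous is at most $\delta n^2$. A partition $\mathcal P_2$ refines $\mathcal P_1$ if every part of $\mathcal P_2$ is contained in a part of $\mathcal P_1$. *)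

(* A graph G is a finite type T of vertices with a
   symmetric irreflexive boolean edge relation e. *)
From HB Require Import structures.
From mathcomp Require Import all_boot all_order all_algebra.
Set Implicit Arguments. Unset Strict Implicit. Unset Printing Implicit Defensive.
Import Order.TTheory GRing.Theory Num.Theory.

Section Defs.
Variable T : finType.
Variable e : rel T.

Definition simple_graph : Prop := symmetric e /\ irreflexive e.

Definition is_clique (X : {set T}) : Prop :=
  forall x y, x \in X -> y \in X -> x != y -> e x y.

Definition induced_M2_copy (X Y : {set T}) (x x' y y' : T) : Prop :=
  [/\ x \in X, x' \in X, y \in Y & y' \in Y] /\
  [/\ e x y, e x' y', ~~ e x y' & ~~ e x' y].

Definition induced_M2_free (X Y : {set T}) : Prop :=
  forall x x' y y', ~ induced_M2_copy X Y x x' y y'.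

Definition homogeneous (A B : {set T}) : bool :=
  [forall a in A, forall b in B, e a b] ||
  [forall a in A, forall b in B, ~~ e a b].

Definition vertex_partition (P : {set {set T}}) : bool := partition P [set: T].

(* sum of |U||V| over ORDERED pairs (U,V) of distinct parts that are not
   homogeneous; this is twice the sum over unordered pairs *)
Definition nonhom_ordered_sum (P : {set {set T}}) : nat :=
  \sum_(U in P) \sum_(V in P | (U != V) && ~~ homogeneous U V) #|U| * #|V|.

Definition delta_homogeneous (R : realFieldType) (delta : R)
    (P : {set {set T}}) : Prop :=
  vertex_partition P /\
  ((nonhom_ordered_sum P)%:R / 2 <= delta * (#|T|%:R) ^+ 2)%R.

Definition refines (k : nat) (P : {set {set T}}) (X : 'I_k -> {set T}) : Prop :=
  forall U, U \in P -> exists i, U \subset X i.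
End Defs.

From HB Require Import structures.
From mathcomp Require Import all_boot all_order all_algebra.
From mathcomp Require Import lra.
Import Order.TTheory GRing.Theory Num.Theory.

(* As (X_i, X_j) is induced M_2-free, the neighbourhoods in X_i of the
   vertices of X_j form a chain, so if X_j is ordered by decreasing degree into X_i,
   every x in X_i is adjacent exactly to an initial segment of X_j: x ~ v iff the rank
   of v is below deg_{X_j}(x).  Cut each X_j into buckets of width about delta |X_j|
   and label a vertex of X_i by the bucket of its degree into every later X_j and by
   the bucket of its rank with respect to every earlier X_j; the label classes form a
   refining partition with at most k (2/delta)^k parts.  A pair of classes U in X_i,
   V in X_j that is not homogeneous must have the degree bucket of U equal to the
   rank bucket of V, so a vertex of X_i lies in non-homogeneous pairs with at most
   2 delta |X_j| vertices of X_j; summing over the at most n^2/2 pairs (u, v) with u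
   in an earlier block than v bounds the non-homogeneous weight by delta n^2. *)

Set Implicit Arguments.
Unset Strict Implicit.
Unset Printing Implicit Defensive.

Lemma block_index_exists (T : finType) (I : finType) (X : I -> {set T}) :
  (forall i j, i != j -> [disjoint X i & X j]) -> (forall v, exists i, v \in X i) ->
  exists c : T -> I, forall v i, (v \in X i) = (c v == i).
Proof.
move=> Xdis Xcov; pose c v := xchoose (Xcov v).
have cP v : v \in X (c v) := xchooseP (Xcov v).
exists c => v i; apply/idP/eqP => [vi|<-//].
by apply/eqP; apply: contraTT vi => /Xdis/disjointFr/(_ (cP v)) ->.
Qed.

Section Partitions.
Variable T : finType.

Lemma sum_card_blocks (P : {set {set T}}) (F : {set T} -> nat) :
  partition P [set: T] -> \sum_(V in P) #|V| * F V = \sum_v F (pblock P v).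
Proof.
move=> partP; transitivity (\sum_(v in [set: T]) F (pblock P v)); last first.
  by apply: eq_bigl => v; rewrite inE.
rewrite (set_partition_big _ partP); apply: eq_bigr => V PV.
rewrite -sum_nat_const; apply: eq_bigr => x Vx.
by case/and3P: partP => _ tI _; rewrite (def_pblock tI PV Vx).
Qed.

Lemma card_preim_partition (rT : finType) (f : T -> rT) (D : {set T}) :
  #|preim_partition f D| <= #|rT|.
Proof.
have -> : preim_partition f D = (fun z => [set y in D | z == f y]) @: (f @: D).
  by rewrite -imset_comp.
exact: leq_trans (leq_imset_card _ _) (max_card _).
Qed.

End Partitions.

Section Homogeneity.
Variables (T : finType) (e : rel T).

Lemma homogeneousC (A B : {set T}) :
  symmetric e -> homogeneous e A B = homogeneous e B A.
Proof.
move=> e_sym; rewrite /homogeneous.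
have swap (p : bool -> bool) (A' B' : {set T}) :
    [forall a in A', forall b in B', p (e a b)] ->
    [forall b in B', forall a in A', p (e b a)].
  move=> /forall_inP AB; apply/forall_inP => b Bb; apply/forall_inP => a Aa.
  by rewrite e_sym; exact: (forall_inP (AB a Aa) b Bb).
by apply/orP/orP => -[] h; [left; exact: (swap id) | right; exact: (swap negb)
  | left; exact: (swap id) | right; exact: (swap negb)].
Qed.

Lemma clique_homogeneous (X U V : {set T}) :
  is_clique e X -> [disjoint U & V] -> U \subset X -> V \subset X ->
  homogeneous e U V.
Proof.
move=> Xcl UV /subsetP UX /subsetP VX; apply/orP; left.
apply/forall_inP => a Ua; apply/forall_inP => b Vb.
apply: Xcl; [exact: UX | exact: VX |].
by apply: contraTneq Vb => <-; rewrite (disjointFr UV Ua).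
Qed.

Definition nonhom_pair (P : {set {set T}}) (u v : T) : bool :=
  (pblock P u != pblock P v) && ~~ homogeneous e (pblock P u) (pblock P v).

Lemma nonhom_pairC P : symmetric e -> symmetric (nonhom_pair P).
Proof. by move=> e_sym u v; rewrite /nonhom_pair eq_sym homogeneousC. Qed.

Lemma nonhom_ordered_sum_pairs P : partition P [set: T] ->
  nonhom_ordered_sum e P = \sum_u \sum_v nonhom_pair P u v.
Proof.
move=> partP; rewrite /nonhom_ordered_sum.
under eq_bigr => U _ do rewrite -big_distrr /=.
rewrite sum_card_blocks //; apply: eq_bigr => u _.
rewrite big_mkcondr /= (eq_bigr (fun V : {set T} => #|V| * ((pblock P u != V) &&
  ~~ homogeneous e (pblock P u) V))) ?sum_card_blocks // => V _.
by case: ifP; rewrite ?muln1 ?muln0.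
Qed.

End Homogeneity.

Section RankAbove.
Variables (T : finType) (g : T -> nat) (B : {set T}).

Definition rank_above (v : T) : nat := #|[set w in B | g v < g w]|.

Lemma rank_above_le_card v : rank_above v <= #|B|.
Proof. by apply: subset_leq_card; apply/subsetP => w; rewrite inE => /andP[]. Qed.

Lemma rank_above_lt v w : w \in B -> g v < g w -> rank_above w < rank_above v.
Proof.
move=> Bw lt_vw; apply: proper_card; apply/properP; split.
  by apply/subsetP => z; rewrite !inE => /andP[-> /(ltn_trans lt_vw) ->].
by exists w; rewrite !inE ?Bw ?lt_vw ?ltnn.
Qed.

Lemma rank_above_inj : {in B &, injective g} -> {in B &, injective rank_above}.
Proof.
move=> g_inj v w Bv Bw eq_rank; apply: g_inj => //.
case: (ltngtP (g v) (g w)) => // [/(rank_above_lt Bw) | /(rank_above_lt Bv)];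
  by rewrite eq_rank ltnn.
Qed.

End RankAbove.

Section DegreeOrder.
Variables (T : finType) (e : rel T).

Definition degree (A : {set T}) (v : T) : nat := #|[set w in A | e v w]|.

Lemma degree_le_card A v : degree A v <= #|A|.
Proof. by apply: subset_leq_card; apply/subsetP => w; rewrite inE => /andP[]. Qed.

(* A vertex ordering refining the order by degree into [A], ties broken by [enum_rank]. *)
Definition degree_score (A : {set T}) (v : T) : nat :=
  degree A v * #|T| + enum_rank v.

Lemma degree_score_inj A : injective (degree_score A).
Proof.
move=> v w /(congr1 (modn^~ #|T|)); rewrite /degree_score !modnMDl.
by rewrite !modn_small ?ltn_ord // => /val_inj /enum_rank_inj.
Qed.

Lemma degree_score_monotone A v w :
  degree A v < degree A w -> degree_score A v < degree_score A w.
Proof.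
move=> lt_vw; rewrite /degree_score.
apply: (@leq_trans ((degree A v).+1 * #|T|)); first by rewrite mulSnr ltn_add2l.
by apply: leq_trans (leq_addr _ _); rewrite leq_mul2r lt_vw orbT.
Qed.

Lemma degree_score_le A v w :
  degree_score A v < degree_score A w -> degree A v <= degree A w.
Proof.
move=> lt_score; rewrite leqNgt; apply/negP => /degree_score_monotone.
by rewrite ltnNge (ltnW lt_score).
Qed.

End DegreeOrder.

Section InducedM2Free.
Variables (T : finType) (e : rel T) (A B : {set T}).
Hypotheses (e_sym : symmetric e) (AB_free : induced_M2_free e A B).

Lemma M2_free_edge_monotone x v w : x \in A -> v \in B -> w \in B -> e x v ->
  degree e A v <= degree e A w -> e x w.
Proof.
move=> Ax Bv Bw exv le_vw; apply/negPn/negP => nexw.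
have /subsetPn[x'] : ~~ ([set z in A | e w z] \subset [set z in A | e v z]).
  apply: contraTN le_vw => sub; rewrite -ltnNge.
  apply: proper_card; apply/properP; split => //.
  by exists x; rewrite !inE Ax ?(e_sym v) ?(e_sym w) ?exv ?(negbTE nexw).
rewrite !inE => /andP[Ax' ewx']; rewrite Ax' /= => nevx'.
have ex'w : e x' w by rewrite e_sym.
have nex'v : ~~ e x' v by rewrite e_sym.
exact: AB_free (conj (And4 Ax Ax' Bv Bw) (And4 exv ex'w nexw nex'v)).
Qed.

Lemma M2_free_edgeE x v : x \in A -> v \in B ->
  e x v = (rank_above (degree_score e A) B v < degree e B x).
Proof.
move=> Ax Bv; apply/idP/idP => [exv | ].
  apply: proper_card; apply/properP; split; last first.
    by exists v; rewrite !inE ?Bv ?exv ?ltnn.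
  apply/subsetP => w; rewrite !inE => /andP[Bw /degree_score_le le_vw].
  by rewrite Bw (M2_free_edge_monotone Ax Bv Bw exv le_vw).
apply: contraTT => nexv; rewrite -leqNgt; apply: subset_leq_card.
apply/subsetP => w; rewrite !inE => /andP[Bw exw]; rewrite Bw /=.
apply: degree_score_monotone; rewrite ltnNge; apply: contra nexv.
exact: M2_free_edge_monotone exw.
Qed.

End InducedM2Free.

Lemma card_quotient_fiber (T : finType) (A : {set T}) (f : T -> nat) (b s : nat) :
  0 < b -> {in A &, injective f} -> #|[set v in A | f v %/ b == s]| <= b.
Proof.
move=> b_gt0 f_inj; pose g v := Ordinal (ltn_pmod (f v) b_gt0).
rewrite -(card_in_imset (f := g)); first by rewrite -[leqRHS]card_ord max_card.
move=> v w; rewrite !inE => /andP[Av /eqP fv] /andP[Aw /eqP fw] /(congr1 val) /= gvw.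
by apply: f_inj => //; rewrite (divn_eq (f v) b) (divn_eq (f w) b) fv fw gvw.
Qed.

Lemma sum_nat_bool_card (T : finType) (P Q : pred T) :
  \sum_(v | P v) (Q v : nat) = #|[set v | P v && Q v]|.
Proof.
rewrite -sum1_card; transitivity (\sum_(v | P v && Q v) 1).
  by rewrite big_mkcondr; apply: eq_bigr => v _; case: (Q v).
by apply: eq_bigl => v; rewrite inE.
Qed.

Lemma sum_symmetric_rel_split (T : finType) (c : T -> nat) (r : rel T) :
  symmetric r -> (forall u v, r u v -> c u != c v) ->
  \sum_u \sum_v r u v = 2 * \sum_u \sum_v (r u v && (c u < c v)).
Proof.
move=> r_sym r_neq.
have split_uv u v : (r u v : nat) = (r u v && (c u < c v)) + (r v u && (c v < c u)).
  rewrite (r_sym v u); case ruv: (r u v) => //=.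
  by have := r_neq _ _ ruv; case: ltngtP.
under eq_bigr => u _ do under eq_bigr => v _ do rewrite split_uv.
under eq_bigr => u _ do rewrite big_split /=.
by rewrite big_split /= [X in _ + X]exchange_big mul2n -addnn.
Qed.

Lemma card_lt_pairs (T : finType) (c : T -> nat) :
  2 * \sum_u \sum_v (c u < c v) <= #|T| ^ 2.
Proof.
rewrite mul2n -addnn [X in _ + X]exchange_big -big_split /=.
apply: (@leq_trans (\sum_(u : T) \sum_(v : T) 1)).
  apply: leq_sum => u _; rewrite -big_split; apply: leq_sum => v _ /=.
  by case: ltngtP.
by rewrite sum1_card sum_nat_const mulnn.
Qed.

Section CliqueBuckets.
Variables (T : finType) (e : rel T) (k : nat) (X : 'I_k -> {set T}).
Variables (c : T -> 'I_k) (width : 'I_k -> nat).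
Hypotheses (e_sym : symmetric e) (X_clique : forall i, is_clique e (X i)).
Hypothesis X_M2_free : forall i j : 'I_k, i < j -> induced_M2_free e (X i) (X j).
Hypothesis mem_X : forall v i, (v \in X i) = (c v == i).
Hypothesis width_gt0 : forall i, 0 < width i.

Lemma mem_X_block v : v \in X (c v).
Proof. by rewrite mem_X. Qed.

Definition rank_in (i : 'I_k) (v : T) : nat :=
  rank_above (degree_score e (X i)) (X (c v)) v.

Lemma edge_rankE x v : c x < c v -> e x v = (rank_in (c x) v < degree e (X (c v)) x).
Proof. by move=> /X_M2_free M2; rewrite (M2_free_edgeE e_sym M2) ?mem_X_block. Qed.

Definition bucket_label (v : T) (j : 'I_k) : nat :=
  if c v < j then degree e (X j) v %/ width j
  else if j < c v then rank_in j v %/ width (c v) else 0.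

Definition max_label : nat := \max_(j < k) (#|X j| %/ width j).

Lemma bucket_label_le v j : bucket_label v j <= max_label.
Proof.
rewrite /bucket_label; case: ifP => _.
  by apply: leq_trans (leq_bigmax j); apply: leq_div2r; apply: degree_le_card.
case: ifP => _ //; apply: leq_trans (leq_bigmax (c v)); apply: leq_div2r.
exact: rank_above_le_card.
Qed.

Definition bucket_key (v : T) : 'I_k * {ffun 'I_k -> 'I_max_label.+1} :=
  (c v, [ffun j => inord (bucket_label v j)]).

Definition bucket_partition : {set {set T}} := preim_partition bucket_key [set: T].

Local Notation P := bucket_partition.

Lemma bucket_partitionP : partition P [set: T].
Proof. exact: preim_partitionP. Qed.

Lemma mem_bucket_pblock u v :
  v \in pblock P u -> c v = c u /\ bucket_label v =1 bucket_label u.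
Proof.
have eqiR : {in [set: T] & &, equivalence_rel (fun x y => bucket_key x == bucket_key y)}.
  by split => // /eqP ->.
rewrite (pblock_equivalence_partition eqiR) ?inE // => /eqP key_uv.
split=> [|j]; first by have /= -> := congr1 fst key_uv.
move: (congr1 snd key_uv) => /ffunP /(_ j); rewrite !ffunE => /(congr1 val).
by rewrite /= !inordK ?ltnS ?bucket_label_le.
Qed.

Lemma pblock_bucket_sub u : pblock P u \subset X (c u).
Proof. by apply/subsetP => v /mem_bucket_pblock[cv _]; rewrite mem_X cv. Qed.

Lemma bucket_partition_refines : refines P X.
Proof.
move=> U PU; have [_ tI P0] := and3P bucket_partitionP.
have /set0Pn[u Uu] : U != set0 by apply: contraNneq P0 => <-.
by exists (c u); rewrite -(def_pblock tI PU Uu) pblock_bucket_sub.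
Qed.

Lemma card_bucket_partition : #|P| <= k * max_label.+1 ^ k.
Proof.
by apply: leq_trans (card_preim_partition _ _) _; rewrite card_prod card_ffun !card_ord.
Qed.

Lemma nonhom_bucket_neq u v : nonhom_pair e P u v -> c u != c v.
Proof.
have [/eqP cover_P tI _] := and3P bucket_partitionP.
have P_pblock z : pblock P z \in P by rewrite pblock_mem ?cover_P.
case/andP => neq_uv; apply: contraNneq => cuv.
apply: (clique_homogeneous (@X_clique (c u))); rewrite ?pblock_bucket_sub //.
  exact: trivIsetP tI _ _ (P_pblock u) (P_pblock v) neq_uv.
by rewrite cuv pblock_bucket_sub.
Qed.

Lemma nonhom_bucket_rank u v : c u < c v -> nonhom_pair e P u v ->
  (1 < width (c v)) &&
  (rank_in (c u) v %/ width (c v) == degree e (X (c v)) u %/ width (c v)).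
Proof.
move=> lt_uv /andP[_]; rewrite /homogeneous negb_or.
case/andP => /forall_inPn[a Ua /forall_inPn[b Vb nab]].
case/forall_inPn => [a' Ua' /forall_inPn[b' Vb']]; rewrite negbK => ea'b'.
have degE x : x \in pblock P u ->
    degree e (X (c v)) x %/ width (c v) = degree e (X (c v)) u %/ width (c v).
  by move=> /mem_bucket_pblock[cx lx]; have := lx (c v); rewrite /bucket_label cx lt_uv.
have rankE z : z \in pblock P v ->
    rank_in (c u) z %/ width (c v) = rank_in (c u) v %/ width (c v).
  move=> /mem_bucket_pblock[cz lz]; have := lz (c u).
  by rewrite /bucket_label cz (leq_gtF (ltnW lt_uv)) lt_uv.
have edgeE x z : x \in pblock P u -> z \in pblock P v ->
    e x z = (rank_in (c u) z < degree e (X (c v)) x).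
  by move=> /mem_bucket_pblock[cx _] /mem_bucket_pblock[cz _]; rewrite edge_rankE cx ?cz.
move: nab ea'b'; rewrite !edgeE // -leqNgt => le_ab lt_a'b'.
have le_uv := leq_div2r (width (c v)) le_ab.
have le_vu := leq_div2r (width (c v)) (ltnW lt_a'b').
rewrite degE // rankE // in le_uv; rewrite degE // rankE // in le_vu.
rewrite eqn_leq le_uv le_vu andbT ltn_neqAle width_gt0 !andbT.
apply: contraTneq lt_a'b' => w1; rewrite -leqNgt.
by move: (degE a' Ua') (rankE b' Vb') le_uv; rewrite -w1 !divn1 => -> ->.
Qed.

Lemma rank_in_inj i j : {in X j &, injective (rank_in i)}.
Proof.
move=> v w; rewrite !mem_X => /eqP cv /eqP cw; rewrite /rank_in cv cw.
by apply: rank_above_inj; rewrite ?mem_X ?cv ?cw //; apply: in2W; apply: degree_score_inj.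
Qed.

Lemma card_nonhom_bucket u (j : 'I_k) : c u < j ->
  #|[set v | (c v == j) && nonhom_pair e P u v]| <= (if 1 < width j then width j else 0).
Proof.
move=> lt_uj; have bucket v : c v == j -> nonhom_pair e P u v ->
    (1 < width j) && (rank_in (c u) v %/ width j == degree e (X j) u %/ width j).
  by move=> /eqP cv; rewrite -cv; apply: nonhom_bucket_rank; rewrite cv.
case: ifP => [w_gt1 | w_le1].
  apply: leq_trans (@card_quotient_fiber _ (X j) _ _ (degree e (X j) u %/ width j)
    (width_gt0 j) (@rank_in_inj (c u) j)).
  apply: subset_leq_card; apply/subsetP => v; rewrite !inE => /andP[cv nh].
  by rewrite mem_X cv; case/andP: (bucket v cv nh).
rewrite leqn0 cards_eq0; apply/eqP/setP => v; rewrite !inE.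
by apply/negP => /andP[cv /(bucket v cv)]; rewrite w_le1.
Qed.

End CliqueBuckets.

Local Open Scope ring_scope.

Lemma symmetric_rel_density (R : realFieldType) (delta : R) (T : finType)
    (k : nat) (c : T -> 'I_k) (r : rel T) :
  0 <= delta -> symmetric r -> (forall u v, r u v -> c u != c v) ->
  (forall u (j : 'I_k), (c u < j)%N ->
     (#|[set v | (c v == j) && r u v]|%:R : R) <= 2 * delta * #|[set v | c v == j]|%:R) ->
  ((\sum_u \sum_v r u v)%N%:R : R) / 2 <= delta * #|T|%:R ^+ 2.
Proof.
move=> delta_ge0 r_sym r_neq r_sparse.
rewrite (@sum_symmetric_rel_split _ (fun v => c v)) // natrM.
set S := \sum_u _; set Q := (\sum_u \sum_v (c u < c v : nat))%N.
have S_le : (S%:R : R) <= 2 * delta * Q%:R.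
  rewrite /S /Q !natr_sum mulr_sumr; apply: ler_sum => u _.
  rewrite (partition_big c xpredT) //.
  rewrite (partition_big c xpredT (F := fun v => (c u < c v)%N : nat)) //.
  rewrite !natr_sum mulr_sumr; apply: ler_sum => j _; rewrite !sum_nat_bool_card.
  case: (ltnP (c u) j) => [uj | ju].
    have -> : #|[set v | xpredT v && (c v == j) && (c u < c v)%N]|
              = #|[set v | c v == j]|.
      by apply: eq_card => v; rewrite !inE; case: eqP => // ->; rewrite uj.
    apply: le_trans (r_sparse u j uj); rewrite ler_nat; apply: subset_leq_card.
    by apply/subsetP => v; rewrite !inE /= => /andP[-> /andP[]].
  rewrite [X in X%:R <= _](_ : _ = 0%N) ?mulr_ge0 ?ler0n //.
  apply/eqP; rewrite cards_eq0; apply/eqP/setP => v; rewrite !inE.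
  by case: eqP => //= ->; rewrite ltnNge ju !andbF.
have Q_le : ((2 * Q)%N%:R : R) <= #|T|%:R ^+ 2 by rewrite -natrX ler_nat card_lt_pairs.
rewrite natrM in Q_le.
rewrite mulrAC mulfV ?pnatr_eq0 // mul1r; nra.
Qed.

Lemma bucket_width_exists (R : realFieldType) (delta : R) (n : nat) :
  0 < delta -> delta <= 1 -> (0 < n)%N ->
  exists b, [/\ (0 < b)%N, ((n %/ b)%N%:R : R) <= delta^-1 &
                (1 < b)%N -> (b%:R : R) <= 2 * delta * n%:R].
Proof.
move=> delta_gt0 delta_le1 n_gt0.
have n_gt0R : (0 : R) < n%:R by rewrite ltr0n.
have exP : exists b, delta * n%:R <= b%:R by exists n; rewrite ler_piMl ?ler0n.
case: (ex_minnP exP) => b ge_b min_b; exists b; split.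
- rewrite lt0n; apply: contraTneq ge_b => ->; rewrite -ltNge mulr_gt0 //.
- have q_le : ((n %/ b)%N%:R : R) * b%:R <= n%:R by rewrite -natrM ler_nat leq_divM.
  rewrite -(ler_pM2r delta_gt0) mulVf ?gt_eqF //.
  have q_ge0 : (0 : R) <= (n %/ b)%N%:R by [].
  nra.
- move=> b_gt1; have b_pred : (b%:R : R) = (b.-1)%:R + 1 by rewrite natr1 prednK // ltnW.
  have pred_ge1 : (1 : R) <= (b.-1)%:R by rewrite ler1n -ltnS prednK // ltnW.
  have pred_lt : (b.-1)%:R < delta * n%:R.
    by rewrite ltNge; apply/negP => /min_b; rewrite leqNgt ltn_predL ltnW.
  lra.
Qed.

Section BucketBounds.
Variables (R : realFieldType) (delta : R).
Variables (T : finType) (e : rel T) (k : nat) (X : 'I_k -> {set T}).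
Variables (c : T -> 'I_k) (width : 'I_k -> nat).
Hypotheses (delta_gt0 : 0 < delta) (delta_le1 : delta <= 1).
Hypotheses (e_sym : symmetric e) (X_clique : forall i, is_clique e (X i)).
Hypothesis X_M2_free : forall i j : 'I_k, (i < j)%N -> induced_M2_free e (X i) (X j).
Hypothesis mem_X : forall v i, (v \in X i) = (c v == i).
Hypothesis width_gt0 : forall i, (0 < width i)%N.

Local Notation P := (bucket_partition e X c width).

Lemma bucket_partition_delta_homogeneous :
  (forall j, (1 < width j)%N -> (width j)%:R <= 2 * delta * #|X j|%:R) ->
  delta_homogeneous e delta P.
Proof.
move=> width_le; have partP := bucket_partitionP e X c width.
split=> //; rewrite nonhom_ordered_sum_pairs //.
apply: (symmetric_rel_density (c := c)) => [||u v|u j lt_uj].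
- exact: ltW.
- exact: nonhom_pairC.
- exact: nonhom_bucket_neq.
- have -> : [set v | c v == j] = X j by apply/setP => v; rewrite inE mem_X.
  apply: le_trans (_ : (if (1 < width j)%N then width j else 0)%:R <= _).
    by rewrite ler_nat card_nonhom_bucket.
  by case: ifP => [/width_le // | _]; rewrite !mulr_ge0 ?ler0n // ltW.
Qed.

Lemma card_bucket_partition_le :
  (forall j, ((#|X j| %/ width j)%N%:R : R) <= delta^-1) ->
  (#|P|%:R : R) <= k%:R * (2 / delta) ^+ k.
Proof.
move=> quot_le; have max_le : ((max_label X width)%:R : R) <= delta^-1.
  apply: (big_ind (fun t : nat => (t%:R : R) <= delta^-1)) => //.
    by rewrite invr_ge0 ltW.
  by move=> x y hx hy; rewrite /maxn; case: ifP.
apply: le_trans (_ : ((k * (max_label X width).+1 ^ k)%N%:R : R) <= _).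
  by rewrite ler_nat card_bucket_partition.
rewrite natrM natrX ler_wpM2l ?ler0n //.
have inv_ge1 : (1 : R) <= delta^-1 by rewrite invf_ge1.
apply: lerXn2r; rewrite ?nnegrE ?ler0n //; first lra.
rewrite -natr1; lra.
Qed.

End BucketBounds.

Theorem lemma2p3 (R : realFieldType) (delta : R) (T : finType) (e : rel T)
  (k : nat) (X : 'I_k -> {set T}) :
  0 < delta -> delta <= 1 ->
  simple_graph e ->
  (forall i, X i != set0) ->
  (forall i j, i != j -> [disjoint X i & X j]) ->
  (forall v : T, exists i, v \in X i) ->
  (forall i, is_clique e (X i)) ->
  (forall i j : 'I_k, (i < j)%N -> induced_M2_free e (X i) (X j)) ->
  exists P : {set {set T}},
    [/\ delta_homogeneous e delta P, refines P X &
        (#|P|%:R : R) <= k%:R * (2 / delta) ^+ k].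
Proof.
move=> delta_gt0 delta_le1 [e_sym _] X_ne X_disj X_cover X_clique X_M2_free.
have [c mem_X] := block_index_exists X_disj X_cover.
have X_gt0 j : (0 < #|X j|)%N by rewrite card_gt0.
have /fin_all_exists[width width_spec] j :=
  bucket_width_exists delta_gt0 delta_le1 (X_gt0 j).
have width_gt0 j : (0 < width j)%N by case: (width_spec j).
exists (bucket_partition e X c width); split.
- by apply: bucket_partition_delta_homogeneous => // j; case: (width_spec j).
- exact: bucket_partition_refines.
- by apply: card_bucket_partition_le => // j; case: (width_spec j).
Qed.
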